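(* Let $B_k$ ($k\ge2$) be a generalized Bethe tree with parameters $n_1,\dots,n_k$, $d_1,\dots,d_k$, $m_1,\dots,m_{k-1}$ as in the context, let $\alpha\in[0,1]$ and $\beta=1-\alpha$. Define polynomials $P_0(\lambda)=1$, $P_1(\lambda)=\lambda-\alpha$, and \[ P_j(\lambda)=(\lambda-\alpha d_j)P_{j-1}(\lambda)-\beta^2m_{j-1}P_{j-2}(\lambda)\quad (j=2,\dots,k). \] Then the characteristic polynomial $\phi(\lambda)=\det(\lambda I-A_\alpha(B_k))$ satisfies \[ \phi(\lambda)=P_k(\lambda)\prod_{j=1}^{k-1}P_j(\lambda)^{n_j-n_{j+1}}. \]
   Context: For a graph $G$, $A(G)$ is the adjacency matrix, $D(G)$ the diagonal degree matrix, and $A_\alpha(G)=\alpha D(G)+(1-\alpha)A(G)$. In a rooted tree, the level of a vertex is its distance to the root plus one. A generalized Bethe tree $B_k$ is a rooted tree with $k$ levels in which all vertices at the same level have the same degree. For $j\in\{1,\dots,k\}$, $n_{k-j+1}$ denotes the number of vertices at level $j$ and $d_{k-j+1}$ their common degree (so index $1$ refers to the deepest level and index $k$ to the root; $d_1=1$, $n_k=1$). For $j\in\{1,\dots,k-1\}$, $m_j=n_j/n_{j+1}$ (a positive integer); one has $n_j=(d_{j+1}-1)n_{j+1}$ for $j\le k-2$ and $n_{k-1}=d_k=m_{k-1}$. *)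

From HB Require Import structures.
From mathcomp Require Import all_boot all_order all_algebra.
Set Implicit Arguments. Unset Strict Implicit. Unset Printing Implicit Defensive.
Import Order.TTheory GRing.Theory Num.Theory.

Definition simple_graph (N : nat) (e : rel 'I_N) : Prop :=
  symmetric e /\ irreflexive e.

Definition is_tree (N : nat) (e : rel 'I_N) : Prop :=
  (forall x y, connect e x y) /\
  ~ (exists c : seq 'I_N, [/\ uniq c, 3 <= size c & cycle e c]).

Definition gdeg (N : nat) (e : rel 'I_N) (x : 'I_N) : nat := #|[set y | e x y]|.

Definition ball (N : nat) (e : rel 'I_N) (x : 'I_N) (n : nat) : {set 'I_N} :=
  iter n (fun S => S :|: [set y | [exists z in S, e z y]]) [set x].

(* graph distance: least n (< N) with y in the n-ball of x
   (equals N if y is unreachable; never happens in a connected graph). *)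
Definition gdist (N : nat) (e : rel 'I_N) (x y : 'I_N) : nat :=
  find (fun n => y \in ball e x n) (iota 0 N).

Definition level (N : nat) (e : rel 'I_N) (r x : 'I_N) : nat := (gdist e r x).+1.

Local Open Scope ring_scope.

Definition adjmx (R : nzRingType) (N : nat) (e : rel 'I_N) : 'M[R]_N :=
  \matrix_(i, j) (e i j)%:R.
Definition degmx (R : nzRingType) (N : nat) (e : rel 'I_N) : 'M[R]_N :=
  \matrix_(i, j) ((i == j)%:R * (gdeg e i)%:R).
Definition A_alpha (R : nzRingType) (N : nat) (e : rel 'I_N) (alpha : R) : 'M[R]_N :=
  alpha *: degmx R e + (1 - alpha) *: adjmx R e.

Fixpoint bethe_P (R : nzRingType) (alpha : R) (d m : nat -> nat) (j : nat)
  : {poly R} :=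
  match j with
  | 0 => 1
  | 1 => 'X - alpha%:P
  | S ((S j'') as j') =>
      ('X - (alpha * (d j)%:R)%:P) * bethe_P alpha d m j'
      - ((1 - alpha) ^+ 2 * (m j')%:R)%:P * bethe_P alpha d m j''
  end.

From HB Require Import structures.
From mathcomp Require Import all_boot all_order all_algebra.
From mathcomp Require Import zify ring fingroup perm fraction.
Import Order.TTheory GRing.Theory Num.Theory.

(* Off the diagonal, [lambda I - A_alpha] only couples
   a vertex with its parent (entry [-beta]), so eliminating vertices from the
   leaves towards the root factors it as [L diag(pivots) L^T] with [L]
   unitriangular, and the determinant is the product of the pivots.  Over
   the fraction field of [R[lambda]], the pivot of a vertex at level
   [k - j + 1] is [P_j / P_(j-1)]: a leaf has pivot [lambda - alpha], and a
   vertex with [m_(j-1)] children gets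
   [lambda - alpha d_j - m_(j-1) beta^2 P_(j-2) / P_(j-1)], which is the
   three-term recurrence.  As level [k - j + 1] has [n_j] vertices, the
   product of the pivots telescopes to [P_k * \prod_j P_j ^ (n_j - n_(j+1))]. *)

Local Open Scope ring_scope.

Lemma det_graded_trig (R : comPzRingType) (n : nat) (A : 'M[R]_n) (f : 'I_n -> nat) :
  (forall i j, i != j -> A i j != 0 -> (f i < f j)%N) -> \det A = \prod_i A i i.
Proof.
move=> A_graded; rewrite /determinant (bigD1 1%g) //= [X in _ + X]big1 ?addr0.
  by rewrite odd_perm1 expr0 mul1r; apply: eq_bigr => i _; rewrite perm1.
move=> s s_neq1; have [i /eqP Ai0 | A_nz] := pickP (fun i => A i (s i) == 0).
  by rewrite (bigD1 i) //= Ai0 mul0r mulr0.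
have f_le i : (f i <= f (s i))%N.
  have [<- // | ne] := eqVneq i (s i).
  by rewrite ltnW // A_graded // A_nz.
have sum_eq : (\sum_i f (s i) = \sum_i f i)%N.
  by rewrite [RHS](reindex_inj (@perm_inj _ s)).
have [_] := leqif_sum (fun i (_ : true) => leqif_eq (f_le i)).
rewrite sum_eq eqxx => /esym/forall_inP f_eq.
case/eqP: s_neq1; apply/permP => i; rewrite perm1; apply/eqP; apply: contraT => ne.
have := A_graded i (s i); rewrite eq_sym ne A_nz (eqP (f_eq i isT)) ltnn.
by move/(_ isT isT).
Qed.

Section TreePivots.
Variables (F : fieldType) (n : nat) (p : 'I_n -> 'I_n) (rt : 'I_n) (f : 'I_n -> nat).
Hypothesis f_par : forall x, x != rt -> f x = (f (p x)).+1.

Let child x a := (x != rt) && (p x == a).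

Let child_irrefl a : child a a = false.
Proof. by apply/negP => /andP[art /eqP pa]; have := f_par _ art; rewrite pa; lia. Qed.

Let child_asym a c : child a c -> child c a = false.
Proof.
move=> /andP[art /eqP pa]; apply/negP => /andP[crt /eqP pc].
by have := f_par _ art; have := f_par _ crt; rewrite pa pc => ->; lia.
Qed.

(* Gaussian elimination of each vertex into its parent: [M = L diag(rv) L^T]
   with [L] unitriangular for the grading [f]. *)
Lemma det_tree_pivots (M : 'M[F]_n) (rv : 'I_n -> F) (b : F) :
  (forall x, rv x != 0) ->
  (forall a c, M a c = (a == c)%:R * (rv a + \sum_(x | child x a) b ^+ 2 / rv x)
      - b * (child a c)%:R - b * (child c a)%:R) ->
  \det M = \prod_i rv i.
Proof.
move=> rv_neq0 M_def.
pose L := \matrix_(a, x) ((x == a)%:R - (child x a)%:R * (b / rv x)) : 'M[F]_n.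
have -> : M = L *m diag_mx (\row_i rv i) *m L^T.
  apply/matrixP => a c; rewrite mul_mx_diag !mxE M_def; symmetry.
  under eq_bigr do rewrite !mxE.
  have [<- | ac] := eqVneq a c.
    rewrite (bigD1 a) //= child_irrefl eqxx /= !mul0r !mulr0 !subr0 mulr1 !mul1r.
    congr (_ + _); rewrite [LHS]big_mkcond [RHS]big_mkcond; apply: eq_bigr => x _ /=.
    have [-> | xa] := eqVneq x a; first by rewrite child_irrefl.
    case: (child x a); rewrite /= ?mulr0n ?mulr1n ?mul0r ?sub0r ?oppr0 ?mul0r //.
    by field; apply: rv_neq0.
  rewrite (bigD1 a) //= (bigD1 c) //=; last by rewrite eq_sym.
  rewrite big1 ?addr0; last first.
    move=> x /andP[xa xc]; rewrite (negbTE xa) (negbTE xc).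
    have [/andP[_ /eqP pxa] | xa'] := boolP (child x a); last first.
      by rewrite /=; ring.
    have [/andP[_ /eqP pxc] | xc'] := boolP (child x c); last first.
      by rewrite /=; ring.
    by case/eqP: ac; rewrite -pxa -pxc.
  rewrite !eqxx !child_irrefl (negbTE ac) eq_sym (negbTE ac) /=.
  have [ca | _] := boolP (child c a).
    by rewrite (child_asym _ _ ca) /=; field; rewrite !rv_neq0.
  by case: (child a c) => /=; field; rewrite !rv_neq0.
have det_L : \det L = 1.
  rewrite (@det_graded_trig _ _ _ f).
    by apply: big1 => i _; rewrite mxE eqxx child_irrefl mul0r subr0.
  move=> a x ax; rewrite mxE (eq_sym x) (negbTE ax).
  case E : (child x a); last by rewrite mul0r subr0 eqxx.
  by move: E => /andP[xrt /eqP <-] _; rewrite (f_par _ xrt).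
rewrite !det_mulmx det_tr det_L det_diag mul1r mulr1.
by apply: eq_bigr => i _; rewrite mxE.
Qed.

End TreePivots.

Lemma bethe_P_monic_size (R : nzRingType) (alpha : R) (d m : nat -> nat) j :
  bethe_P alpha d m j \is monic /\ size (bethe_P alpha d m j) = j.+1.
Proof.
suff [] : (bethe_P alpha d m j \is monic /\ size (bethe_P alpha d m j) = j.+1) /\
          (bethe_P alpha d m j.+1 \is monic /\ size (bethe_P alpha d m j.+1) = j.+2) by [].
elim: j => [|j [[_ size_j] [monic_j1 size_j1]]].
  by rewrite /= monic1 size_poly1 monicXsubC size_XsubC.
split=> //; pose P := ('X - (alpha * (d j.+2)%:R)%:P) * bethe_P alpha d m j.+1.
have -> : bethe_P alpha d m j.+2 =
          P - ((1 - alpha) ^+ 2 * (m j.+1)%:R)%:P * bethe_P alpha d m j by [].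
have monic_P : P \is monic by rewrite monicMl // monicXsubC.
have size_P : size P = j.+3.
  by rewrite size_monicM ?monicXsubC ?size_XsubC ?size_j1 // monic_neq0.
have size_lower : (size (- (((1 - alpha) ^+ 2 * (m j.+1)%:R)%:P * bethe_P alpha d m j))
                   < size P)%N.
  by rewrite size_polyN mul_polyC size_P (leq_ltn_trans (size_scale_leq _ _)) ?size_j.
by rewrite monicE lead_coefDl // -monicE monic_P size_polyDl // size_P.
Qed.

Lemma prod_ratio_telescope (F : fieldType) (Q : nat -> F) (c : nat -> nat) K :
  Q 0%N = 1 -> (forall j, Q j != 0) ->
  (forall j, (1 <= j < K)%N -> (c j.+1 <= c j)%N) ->
  \prod_(1 <= j < K.+1) (Q j / Q j.-1) ^+ c j =
  Q K ^+ c K * \prod_(1 <= j < K) Q j ^+ (c j - c j.+1).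
Proof.
move=> Q0 Q_neq0; elim: K => [|K IH] c_decr.
  by rewrite !big_geq // Q0 expr1n mulr1.
rewrite big_nat_recr //= {}IH; last by move=> j /andP[j1 jK]; apply: c_decr; lia.
case: K c_decr => [|K] c_decr.
  by rewrite !big_geq // Q0 expr1n !mul1r mulr1 divr1.
have c_le : (c K.+2 <= c K.+1)%N by apply: c_decr; lia.
rewrite [in RHS]big_nat_recr //= -{1}(subnK c_le) exprD expr_div_n.
by field; rewrite expf_neq0.
Qed.

Lemma continued_fraction_step (F : fieldType) (T q1 q0 b c : F) : q1 != 0 -> q0 != 0 ->
  (T * q1 - b ^+ 2 * c * q0) / q1 + c * (b ^+ 2 / (q1 / q0)) = T.
Proof. by move=> q1_neq0 q0_neq0; field; rewrite q1_neq0 q0_neq0. Qed.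

Section RootedTree.
Variables (N : nat) (e : rel 'I_N) (r : 'I_N).
Hypotheses (e_sym : symmetric e) (e_irr : irreflexive e).
Hypothesis e_connected : forall x y, connect e x y.
Hypothesis e_acyclic :
  ~ (exists c : seq 'I_N, [/\ uniq c, (3 <= size c)%N & path.cycle e c]).

Local Notation D := (gdist e r).

Lemma ballS h : ball e r h.+1 = ball e r h :|: [set y | [exists z in ball e r h, e z y]].
Proof. by []. Qed.

Lemma mem_ball_last h z p :
  z \in ball e r h -> path e z p -> last z p \in ball e r (h + size p).
Proof.
elim: p h z => [|y p IHp] h z /=; first by rewrite addn0.
move=> z_in /andP[ezy yp]; rewrite addnS -addSn; apply: IHp yp.
by rewrite ballS inE; apply/orP; right; rewrite inE; apply/existsP; exists z; rewrite z_in.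
Qed.

Lemma has_mem_ball y : has (fun h => y \in ball e r h) (iota 0 N).
Proof.
have /connectP[p r_p ->] := e_connected r y.
case/shortenP: r_p => q r_q uniq_q _; apply/hasP; exists (size q).
  rewrite mem_iota add0n; have := max_card (mem (r :: q)).
  by rewrite card_ord (card_uniqP uniq_q).
by have := mem_ball_last 0 r q; rewrite add0n; apply => //; apply: set11.
Qed.

Lemma gdist_lt y : (D y < N)%N.
Proof. by have := has_mem_ball y; rewrite has_find size_iota. Qed.

Lemma mem_ball_gdist y : y \in ball e r (D y).
Proof. by have := nth_find 0 (has_mem_ball y); rewrite nth_iota ?add0n ?gdist_lt. Qed.

Lemma gdist_le {y h} : y \in ball e r h -> (D y <= h)%N.
Proof.
move=> y_in; rewrite leqNgt; apply/negP => lt_h.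
by have := before_find 0 lt_h; rewrite nth_iota ?add0n ?y_in // (ltn_trans lt_h) ?gdist_lt.
Qed.

Lemma gdist_root : D r = 0%N.
Proof. by apply/eqP; rewrite -leqn0; apply: gdist_le; apply: set11. Qed.

Lemma gdist_eq0 y : (D y == 0%N) = (y == r).
Proof.
apply/eqP/eqP => [Dy0 | ->]; last exact: gdist_root.
by have := mem_ball_gdist y; rewrite Dy0 => /set1P.
Qed.

Lemma gdist_edge {z y} : e z y -> (D y <= (D z).+1)%N.
Proof.
move=> ezy; apply: gdist_le; rewrite ballS inE; apply/orP; right.
by rewrite inE; apply/existsP; exists z; rewrite mem_ball_gdist ezy.
Qed.

Lemma exists_parent {y} : y != r -> exists z, e y z && ((D z).+1 == D y).
Proof.
move=> y_neq_r; have := mem_ball_gdist y.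
case Dy : (D y) => [|h]; first by rewrite -gdist_eq0 Dy in y_neq_r.
rewrite ballS inE => /orP[y_in | /[!inE] /existsP[z /andP[z_in ezy]]].
  by have := gdist_le y_in; rewrite Dy ltnn.
exists z; rewrite e_sym ezy /= eqSS eqn_leq gdist_le //=.
by have := gdist_edge ezy; rewrite Dy.
Qed.

Definition par y := odflt y [pick z | e y z && ((D z).+1 == D y)].

Lemma par_spec {y} : y != r -> e y (par y) /\ (D (par y)).+1 = D y.
Proof.
move=> y_neq_r; rewrite /par; case: pickP => [z /andP[? /eqP ?] | none] //=.
by have [z] := exists_parent y_neq_r; rewrite none.
Qed.

(* Climbing from both ends to the parents either closes a cycle (equal
   parents) or yields the same configuration one level closer to the root. *)
Lemma no_path_within_level h a b q : a != b -> D a = h -> D b = h ->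
  all (fun z => h < D z)%N q -> uniq q -> path e a (rcons q b) -> False.
Proof.
elim: h a b q => [|h IH] a b q ab Da Db q_deep uniq_q p_ab.
  suff [/eqP a_r /eqP b_r] : a == r /\ b == r by rewrite a_r b_r eqxx in ab.
  by rewrite -!gdist_eq0 Da Db.
have a_neq_r : a != r by rewrite -gdist_eq0 Da.
have b_neq_r : b != r by rewrite -gdist_eq0 Db.
have [e_a /eqP] := par_spec a_neq_r; rewrite Da eqSS => /eqP Dpa.
have [e_b /eqP] := par_spec b_neq_r; rewrite Db eqSS => /eqP Dpb.
have [a_notin b_notin] : a \notin q /\ b \notin q.
  by split; apply/negP => /(allP q_deep) /=; rewrite ?Da ?Db ltnn.
have uniq_abq : uniq (a :: rcons q b).
  by rewrite /= mem_rcons in_cons negb_or ab a_notin rcons_uniq b_notin uniq_q.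
have abq_deep : all (fun z => h < D z)%N (a :: rcons q b).
  rewrite /= all_rcons Da Db ltnSn /=.
  by apply: sub_all q_deep => z /ltnW.
have [par_eq | par_neq] := eqVneq (par a) (par b).
  apply: e_acyclic; exists (par a :: a :: rcons q b); split.
  - by rewrite cons_uniq uniq_abq andbT; apply/negP => /(allP abq_deep) /=; rewrite Dpa ltnn.
  - by rewrite /= size_rcons.
  - by rewrite /= rcons_path last_rcons p_ab par_eq e_b andbT e_sym -par_eq e_a.
apply: (IH (par a) (par b) (a :: rcons q b)) => //.
by rewrite /= e_sym e_a /= rcons_path p_ab last_rcons e_b.
Qed.

Lemma gdist_edge_succ {x y} : e x y -> D y = (D x).+1 \/ D x = (D y).+1.
Proof.
move=> exy; have le_yx := gdist_edge exy.
have le_xy : (D x <= (D y).+1)%N by apply: gdist_edge; rewrite e_sym.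
case: (ltngtP (D x) (D y)) => [lt | gt | eq].
- by left; apply/eqP; rewrite eqn_leq le_yx lt.
- by right; apply/eqP; rewrite eqn_leq le_xy gt.
exfalso; apply: (no_path_within_level (D x) x y [::]) => //=; last by rewrite exy.
by apply: contraTneq exy => ->; rewrite e_irr.
Qed.

Lemma par_unique {x y} : x != r -> e x y -> (D y).+1 = D x -> y = par x.
Proof.
move=> x_neq_r exy Dy; have [e_p Dp] := par_spec x_neq_r.
apply/eqP/negPn/negP => ne.
apply: (no_path_within_level (D y) y (par x) [:: x]) => //=.
- by apply/eqP; rewrite -eqSS Dp Dy.
- by rewrite -Dy ltnSn.
- by rewrite e_sym exy e_p.
Qed.

Definition children a := [set x | (x != r) && (par x == a)].

Lemma gdist_children {a x} : x \in children a -> D x = (D a).+1.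
Proof. by rewrite inE => /andP[x_neq_r /eqP <-]; have [_ ->] := par_spec x_neq_r. Qed.

Lemma par_neq {a} : a != r -> par a != a.
Proof.
move=> a_neq_r; have [_ Dp] := par_spec a_neq_r.
by apply/eqP => par_a; move: Dp; rewrite par_a; lia.
Qed.

Lemma edge_par {a c} : a != c ->
  e a c = ((a != r) && (par a == c)) || ((c != r) && (par c == a)).
Proof.
move=> ac; apply/idP/idP => [eac | /orP[] /andP[x_neq_r /eqP <-]].
- case: (gdist_edge_succ eac) => D_succ.
    have c_neq_r : c != r by rewrite -gdist_eq0 D_succ.
    by rewrite -(par_unique c_neq_r _ (esym D_succ)) ?eqxx ?c_neq_r ?orbT // e_sym.
  have a_neq_r : a != r by rewrite -gdist_eq0 D_succ.
  by rewrite -(par_unique a_neq_r eac (esym D_succ)) eqxx a_neq_r.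
- by case: (par_spec x_neq_r).
- by rewrite e_sym; case: (par_spec x_neq_r).
Qed.

Lemma gdeg_children a : gdeg e a = (#|children a| + (a != r))%N.
Proof.
rewrite /gdeg; have [-> | a_neq_r] := eqVneq a r.
  rewrite addn0; apply: eq_card => y; rewrite !inE.
  have [<- | ry] := eqVneq r y; first by rewrite e_irr.
  by rewrite edge_par // eqxx /= eq_sym ry.
have -> : [set y | e a y] = par a |: children a.
  apply/setP => y; rewrite !inE.
  have [<- | ay] := eqVneq a y.
    by rewrite e_irr (eq_sym a) (negbTE (par_neq a_neq_r)) andbF.
  by rewrite (edge_par ay) a_neq_r /= (eq_sym y).
rewrite cardsU1 addnC; congr (_ + _)%N.
suff -> : par a \notin children a by [].
by apply/negP => /gdist_children; have [_ <-] := par_spec a_neq_r; lia.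
Qed.

Lemma card_gdist_succ h :
  #|[set x | D x == h.+1]| = (\sum_(a | D a == h) #|children a|)%N.
Proof.
rewrite -sum1_card (partition_big par (fun a => D a == h)) => [|x /[!inE] /eqP Dx].
  apply: eq_bigr => a /eqP Da; rewrite -sum1_card; apply: eq_bigl => x.
  rewrite !inE; apply/andP/andP => [[/eqP Dx pa] | [x_neq_r pa]].
    by split=> //; rewrite -gdist_eq0 Dx.
  by split=> //; have [_ <-] := par_spec x_neq_r; rewrite (eqP pa) Da.
have x_neq_r : x != r by rewrite -gdist_eq0 Dx.
by have [_] := par_spec x_neq_r; rewrite Dx => -[->].
Qed.

Lemma exists_gdist x h : (h <= D x)%N -> exists y, D y = h.
Proof.
have climb i : (i <= D x)%N -> exists y, D y = (D x - i)%N.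
  elim: i => [|i IHi] le_i; first by exists x; rewrite subn0.
  have [y Dy] := IHi (ltnW le_i).
  have y_neq_r : y != r by rewrite -gdist_eq0 Dy subn_eq0 -ltnNge.
  by have [_ Dp] := par_spec y_neq_r; exists (par y); lia.
by move=> le_h; have [y Dy] := climb _ (leq_subr h (D x)); exists y; rewrite Dy subKn.
Qed.

Section GeneralizedBethe.
Variables (R : idomainType) (k : nat) (n d : nat -> nat) (alpha : R).
Hypothesis k_ge2 : (2 <= k)%N.
Hypothesis level_le : forall x, (level e r x <= k)%N.
Hypothesis level_max : exists x, level e r x = k.
Hypothesis n_level :
  forall j, (1 <= j <= k)%N -> n j = #|[set x | level e r x == (k - j).+1]|.
Hypothesis gdeg_level : forall x, gdeg e x = d (k - level e r x).+1.

Let lsize h := #|[set x | D x == h]|.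

Lemma gdist_lt_k x : (D x < k)%N.
Proof. exact: level_le. Qed.

Lemma n_lsize j : (1 <= j <= k)%N -> n j = lsize (k - j)%N.
Proof. by move=> j_range; rewrite n_level //; apply: eq_card => x; rewrite !inE eqSS. Qed.

Lemma card_children_gdist a a' : D a = D a' -> #|children a| = #|children a'|.
Proof.
move=> D_eq; have : gdeg e a = gdeg e a' by rewrite !gdeg_level /level D_eq.
by rewrite !gdeg_children -!gdist_eq0 D_eq => /addIn.
Qed.

Lemma lsize_succ a : lsize (D a).+1 = (lsize (D a) * #|children a|)%N.
Proof.
rewrite /lsize card_gdist_succ (eq_bigr (fun _ => #|children a|)).
  by rewrite sum_nat_const; congr (_ * _)%N; apply: eq_card => x; rewrite inE.
by move=> a' /eqP D_eq; apply: card_children_gdist; rewrite D_eq.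
Qed.

Lemma lsize_gt0 h : (h < k)%N -> (0 < lsize h)%N.
Proof.
move=> lt_hk; have [x Dx] := level_max.
have [y Dy] : exists y, D y = h.
  by apply: (exists_gdist x); rewrite -ltnS; move: lt_hk; rewrite -Dx.
by rewrite /lsize card_gt0; apply/set0Pn; exists y; rewrite inE Dy.
Qed.

Lemma lsize0 : lsize 0 = 1%N.
Proof. by rewrite /lsize -(cards1 r); apply: eq_card => x; rewrite !inE gdist_eq0. Qed.

Lemma card_children_n a : ((D a).+1 < k)%N ->
  #|children a| = (n (k - D a).-1 %/ n (k - D a))%N.
Proof.
move=> lt_Da; have lt_Dak := ltnW lt_Da.
rewrite -subnS !n_lsize ?subKn ?lsize_succ ?mulKn ?lsize_gt0 //; lia.
Qed.

Lemma children_leaf a : (D a).+1 = k -> #|children a| = 0%N.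
Proof.
move=> Da; apply: eq_card0 => x; apply/negbTE/negP => /gdist_children Dx.
by have := gdist_lt_k x; rewrite Dx Da ltnn.
Qed.

Lemma n_nonincreasing j : (1 <= j < k)%N -> (n j.+1 <= n j)%N.
Proof.
move=> j_range; have /set0Pn[a /[!inE] /eqP Da] : [set x | D x == (k - j.+1)%N] != set0.
  by rewrite -card_gt0 lsize_gt0 //; lia.
have k_j : (k - j = (D a).+1)%N by rewrite Da; lia.
have lt_Dak : ((D a).+1 < k)%N by lia.
rewrite !n_lsize; try lia.
rewrite k_j -Da lsize_succ leq_pmulr //.
by have := lsize_gt0 _ lt_Dak; rewrite lsize_succ muln_gt0 => /andP[].
Qed.

Local Notation m := (fun j => (n j %/ n j.+1)%N).
Local Notation P := (bethe_P alpha d m).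

Let Q j : {fraction {poly R}} := tofrac (P j).
Let beta : {fraction {poly R}} := tofrac (1 - alpha)%:P.
(* [k - D x] is the index [j] of the level [k - j + 1] of [x]. *)
Let pivot x := Q (k - D x)%N / Q (k - D x).-1.

Let Q_neq0 j : Q j != 0.
Proof. by rewrite tofrac_eq0 monic_neq0 //; case: (bethe_P_monic_size _ alpha d m j). Qed.

Let Q_succ2 j : Q j.+2 =
  tofrac ('X - (alpha * (d j.+2)%:R)%:P) * Q j.+1 - beta ^+ 2 * (m j.+1)%:R * Q j.
Proof.
rewrite /Q /= tofracB !tofracM; congr (_ - _ * _).
by rewrite polyCM rmorphXn tofracM tofracXn polyC_natr rmorph_nat.
Qed.

Lemma pivot_recurrence a :
  pivot a + \sum_(x | (x != r) && (par x == a)) beta ^+ 2 / pivot x =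
  tofrac ('X - (alpha * (gdeg e a)%:R)%:P).
Proof.
have sum_children : \sum_(x | (x != r) && (par x == a)) beta ^+ 2 / pivot x =
    #|children a|%:R * (beta ^+ 2 / (Q (k - (D a).+1)%N / Q (k - (D a).+1).-1)).
  rewrite mulr_natl -sumr_const; apply: eq_big => [x | x x_child]; first by rewrite inE.
  by rewrite /pivot (@gdist_children a x) ?inE.
rewrite sum_children /pivot; have := gdist_lt_k a.
rewrite leq_eqVlt => /orP[/eqP leaf | lt_Da].
  have a_neq_r : a != r by rewrite -gdist_eq0; apply/eqP; lia.
  have -> : (k - D a)%N = 1%N by lia.
  rewrite gdeg_children a_neq_r children_leaf // mul0r addr0 mulr1.
  by rewrite /Q /= tofrac1 divr1.
have [j k_Da] : exists j, (k - D a)%N = j.+2 by exists (k - D a - 2)%N; lia.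
have -> : (k - (D a).+1)%N = j.+1 by lia.
have -> : gdeg e a = d j.+2 by rewrite gdeg_level /level; congr d; lia.
by rewrite k_Da card_children_n // k_Da Q_succ2 continued_fraction_step.
Qed.

Lemma char_poly_mx_tree a c :
  map_mx (@tofrac _) (char_poly_mx (A_alpha e alpha)) a c =
  (a == c)%:R * (pivot a + \sum_(x | (x != r) && (par x == a)) beta ^+ 2 / pivot x)
  - beta * ((a != r) && (par a == c))%:R - beta * ((c != r) && (par c == a))%:R.
Proof.
rewrite !mxE; have [<- | ac] := eqVneq a c.
  have par_a : (a != r) && (par a == a) = false.
    by have [// | a_neq_r] := eqVneq a r; rewrite (negbTE (par_neq a_neq_r)).
  by rewrite pivot_recurrence e_irr par_a /= mulr1n !mul1r !mulr0 !subr0 addr0.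
rewrite (edge_par ac) /= mulr0n !mul0r add0r sub0r mulr0 add0r.
rewrite polyCM rmorphN rmorphM /= polyC_natr rmorph_nat.
have [/andP[a_neq_r /eqP pa] | _] := boolP ((a != r) && (par a == c));
  have [/andP[c_neq_r /eqP pc] | _] := boolP ((c != r) && (par c == a)).
- have [_] := par_spec a_neq_r; have [_] := par_spec c_neq_r; rewrite pa pc; lia.
all: by rewrite /= ?mulr1n ?mulr0n ?mulr1 ?mulr0 ?oppr0 ?subr0 ?sub0r ?addr0.
Qed.

Lemma prod_pivot :
  \prod_i pivot i = tofrac (P k * \prod_(1 <= j < k) P j ^+ (n j - n j.+1)%N).
Proof.
have by_level : \prod_i pivot i = \prod_(h < k) (Q (k - h)%N / Q (k - h).-1) ^+ lsize h.
  rewrite (partition_big (fun i => Ordinal (gdist_lt_k i)) xpredT) //=.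
  apply: eq_bigr => h _; rewrite -prodr_const; apply: eq_big => [x | x /eqP <-] //.
  by rewrite inE; apply/eqP/eqP => [<- | Dx] //; apply: val_inj.
rewrite by_level -(big_mkord xpredT (fun h => (Q (k - h)%N / Q (k - h).-1) ^+ lsize h)).
rewrite big_nat_rev (eq_big_nat _ _ (F2 := fun j => (Q j.+1 / Q j) ^+ n j.+1)); last first.
  move=> j /andP[_ lt_jk]; rewrite add0n (_ : k - (k - j.+1) = j.+1)%N; last by lia.
  by rewrite n_lsize //; lia.
rewrite -(big_add1 _ _ 0 k.+1 xpredT (fun j => (Q j / Q j.-1) ^+ n j)) /=.
rewrite prod_ratio_telescope // ?tofrac1 //; last exact: n_nonincreasing.
rewrite n_lsize ?subnn ?lsize0 ?expr1 //; last by lia.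
by rewrite rmorphM rmorph_prod; congr (_ * _); apply: eq_bigr => j _; rewrite rmorphXn.
Qed.

Lemma char_poly_bethe :
  char_poly (A_alpha e alpha) = P k * \prod_(1 <= j < k) P j ^+ (n j - n j.+1)%N.
Proof.
apply/eqP; rewrite -tofrac_eq -prod_pivot; apply/eqP.
rewrite /char_poly -det_map_mx; apply: (@det_tree_pivots _ _ par r D) => [x x_neq_r | x |].
- by have [_ <-] := par_spec x_neq_r.
- by rewrite mulf_neq0 ?invr_neq0.
- exact: char_poly_mx_tree.
Qed.

End GeneralizedBethe.

End RootedTree.

(* Equal degrees on a level already follow from the degree formula, and the
   identity holds for every [alpha]. *)
Theorem theorem4 (R : realFieldType) (N k : nat) (e : rel 'I_N) (r : 'I_N)
    (n d : nat -> nat) (alpha : R) :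
  simple_graph e -> is_tree e ->
  (2 <= k)%N ->
  (forall x, (level e r x <= k)%N) ->
  (exists x, level e r x = k) ->
  (forall x y, level e r x = level e r y -> gdeg e x = gdeg e y) ->
  (forall j, (1 <= j <= k)%N ->
     n j = #|[set x | level e r x == (k - j).+1]|) ->
  (forall x, gdeg e x = d (k - level e r x).+1) ->
  0 <= alpha <= 1 ->
  let m := fun j => (n j %/ n j.+1)%N in
  char_poly (A_alpha e alpha) =
    bethe_P alpha d m k *
    \prod_(1 <= j < k) bethe_P alpha d m j ^+ (n j - n j.+1)%N.
Proof.
move=> [e_sym e_irr] [e_connected e_acyclic] k_ge2 level_le level_max _ n_level gdeg_level _ m.
exact: char_poly_bethe.
Qed.
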